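(* Let $\lambda=(\lambda_1,\ldots,\lambda_n)\in\mathbb{C}^n$ have pairwise distinct entries and let $\hat\lambda$ be any permutation (rearrangement) of the entries of $\lambda$. Then for all $t$, $[\nu_{0,\lambda}(t),\ldots,\nu_{n-1,\lambda}(t)]=[\nu_{0,\hat\lambda}(t),\ldots,\nu_{n-1,\hat\lambda}(t)]$.
   Context: For $\lambda\in\mathbb{C}^n$ with distinct entries, $V_\lambda$ is the $n\times n$ Vandermonde matrix with $(i,j)$ entry $\lambda_j^{i-1}$, and the Vandermonde basis functions are defined by $[\nu_{0,\lambda}(t),\ldots,\nu_{n-1,\lambda}(t)]=[e^{\lambda_1 t},\ldots,e^{\lambda_n t}]\,V_\lambda^{-1}$. *)

From HB Require Import structures.
From mathcomp Require Import all_boot all_order all_algebra all_fingroup.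
From mathcomp Require Import all_classical all_reals all_analysis.
From mathcomp.real_closed Require Import complex.
Set Implicit Arguments. Unset Strict Implicit. Unset Printing Implicit Defensive.
Import Order.TTheory GRing.Theory Num.Theory.
Local Open Scope ring_scope.
Local Open Scope complex_scope.

Definition cexp (R : realType) (z : R[i]) : R[i] :=
  let: a +i* b := z in (expR a * cos b) +i* (expR a * sin b).

(* Vandermonde matrix V_lambda, (i,j) entry lambda_j^(i-1) (0-indexed: lambda_j^i) *)
Definition vdm (R : realType) (n : nat) (lam : 'I_n -> R[i]) : 'M[R[i]]_n :=
  \matrix_(i < n, j < n) lam j ^+ i.

(* row vector [nu_{0,lambda}(t), ..., nu_{n-1,lambda}(t)]
   = [e^{lambda_1 t}, ..., e^{lambda_n t}] V_lambda^{-1} *)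
Definition vandbasis (R : realType) (n : nat) (lam : 'I_n -> R[i]) (t : R) : 'rV[R[i]]_n :=
  (\row_(j < n) cexp (lam j * t%:C)) *m invmx (vdm lam).

From HB Require Import structures.
From mathcomp Require Import all_boot all_order all_algebra all_fingroup.
From mathcomp Require Import all_classical all_reals all_analysis.
From mathcomp.real_closed Require Import complex.
Local Open Scope ring_scope.
Local Open Scope complex_scope.
Import GRing.Theory.

(* Permuting the entries of lambda permutes the columns of both the exponential
   row r and V_lambda, i.e. multiplies both on the right by the same permutation
   matrix P, and (r P) (V P)^-1 = r V^-1 as soon as V is invertible, which the
   Vandermonde determinant guarantees for distinct entries. *)

Lemma mulmx_invmx_col_perm (F : comUnitRingType) (m n : nat)
    (r : 'M[F]_(m, n)) (V : 'M[F]_n) (s : 'S_n) :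
  V \in unitmx -> col_perm s r *m invmx (col_perm s V) = r *m invmx V.
Proof.
move=> V_unit; rewrite !col_permE.
have -> : r *m perm_mx s^-1 = r *m invmx V *m (V *m perm_mx s^-1).
  by rewrite mulmxA mulmxKV.
by rewrite mulmxK // unitmx_mul V_unit unitmx_perm.
Qed.

Lemma vdm_col_perm (R : realType) (n : nat) (lam : 'I_n -> R[i]) (s : 'S_n) :
  vdm (fun j => lam (s j)) = col_perm s (vdm lam).
Proof. by apply/matrixP => i j; rewrite !mxE. Qed.

Lemma vdm_unitmx (R : realType) (n : nat) (lam : 'I_n -> R[i]) :
  injective lam -> vdm lam \in unitmx.
Proof.
move=> lam_inj.
have -> : vdm lam = Vandermonde n (\row_j lam j) by apply/matrixP => i j; rewrite !mxE.
rewrite unitmxE det_Vandermonde unitfE.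
apply/prodf_neq0 => i _; apply/prodf_neq0 => j lt_ij.
by rewrite !mxE subr_eq0 (inj_eq lam_inj) eq_sym neq_ltn lt_ij.
Qed.

Theorem proposition3 (R : realType) (n : nat) (lam : 'I_n -> R[i])
  (hdist : injective lam) (s : 'S_n) (t : R) :
  vandbasis lam t = vandbasis (fun j => lam (s j)) t.
Proof.
rewrite /vandbasis vdm_col_perm.
have -> : \row_j cexp (lam (s j) * t%:C) = col_perm s (\row_j cexp (lam j * t%:C)).
  by apply/matrixP => i j; rewrite !mxE.
by rewrite mulmx_invmx_col_perm // vdm_unitmx.
Qed.
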